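(* Let $n \geq k \geq 1$ and let $Z_1,\ldots,Z_k$ be subsets of $[n]$ with $|Z_i| = k-1$ for every $i\in[k]$. Let $\alpha_1,\ldots,\alpha_n$ be indeterminates and, for $i\in[k]$, let $f_i(x)=\prod_{j\in Z_i}(x-\alpha_j)=\sum_{j=1}^{k} a_{i,j}x^{j-1}$, where each $a_{i,j}$ is a polynomial in $\alpha_1,\ldots,\alpha_n$ with integer coefficients. Let $\mathbf{A}=(a_{i,j})_{i,j\in[k]}$ and \[ F(\alpha_1,\ldots,\alpha_n)=\det(\mathbf{A})\prod_{1\le j<i\le n}(\alpha_i-\alpha_j). \] Then for every $t\in[n]$, the degree of $F$ in the variable $\alpha_t$ is at most $n+k-2$.
   Context: $[n]=\{1,\ldots,n\}$. *)

From HB Require Import structures.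
From mathcomp Require Import all_boot all_order all_algebra.
Set Implicit Arguments. Unset Strict Implicit. Unset Printing Implicit Defensive.
Import GRing.Theory.
Local Open Scope ring_scope.

(* Indices: [n] is represented by 'I_n (0-based), [k] by 'I_k.
   alpha : 'I_n -> S gives the values of alpha_1..alpha_n in a commutative ring S. *)

Definition fpoly (S : comNzRingType) (n k : nat) (Z : 'I_k -> {set 'I_n})
  (alpha : 'I_n -> S) (i : 'I_k) : {poly S} :=
  \prod_(j in Z i) ('X - (alpha j)%:P).

(* A = (a_{i,j}), a_{i,j} = coefficient of x^{j-1} in f_i (0-based: x^j) *)
Definition Amx (S : comNzRingType) (n k : nat) (Z : 'I_k -> {set 'I_n})
  (alpha : 'I_n -> S) : 'M[S]_k :=
  \matrix_(i < k, j < k) (fpoly Z alpha i)`_j.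

Definition Fval (S : comNzRingType) (n k : nat) (Z : 'I_k -> {set 'I_n})
  (alpha : 'I_n -> S) : S :=
  \det (Amx Z alpha) *
  \prod_(i < n) \prod_(j < n | (j < i)%N) (alpha i - alpha j).

Definition alpha_at (R : comNzRingType) (n : nat) (t : 'I_n) (c : 'I_n -> R)
  (j : 'I_n) : {poly R} :=
  if j == t then 'X else (c j)%:P.

From HB Require Import structures.
From mathcomp Require Import all_boot all_order all_algebra.
From mathcomp Require Import zify.
Import GRing.Theory.
Local Open Scope ring_scope.
Local Open Scope nat_scope.

(* Proof of Lemma 1.  Specialise alpha_t to the variable 'X and every other
   alpha_j to a constant, so that "degree in alpha_t" becomes the size of a
   polynomial in {poly R}; f_i then lives in {poly {poly R}}.

   The coefficients of f_i have alpha_t-degree at most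
     [t \in Z_i], since only the factor (x - alpha_t) involves alpha_t.  As the
     determinant is a sum of products taking one entry per row, its
     alpha_t-degree is at most the number of i with t \in Z_i.
   - If t lies in every Z_i this bound is k, but then det A = 0: the vector
     (1, alpha_t, ..., alpha_t^(k-1)) is annihilated by A, because row i of A
     times it is f_i(alpha_t) = 0, and a matrix with a kernel vector having an
     entry 1 has determinant 0 (adjugate identity).  Otherwise the bound is k-1.
   - Vandermonde factor.  Its alpha_t-degree is at most the number of pairs
     j < i containing t, namely n - 1.
   Adding up gives n + k - 2, i.e. size at most n + k - 1. *)

Section AlphaDegreeBounds.
Set Implicit Arguments.
Unset Strict Implicit.

Lemma size_sum_le (R : comNzRingType) (I : Type) (r : seq I) (P : pred I)
  (F : I -> {poly R}) (d : nat) :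
  (forall i, P i -> size (F i) <= d) -> size (\sum_(i <- r | P i) F i)%R <= d.
Proof.
move=> leF; apply: (big_ind (fun p : {poly R} => size p <= d)) => //.
- by rewrite size_poly0.
- by move=> p q lep leq; rewrite (leq_trans (size_polyD _ _)) // geq_max lep.
Qed.

Lemma size_prod_le (R : comNzRingType) (I : Type) (r : seq I) (P : pred I)
  (F : I -> {poly R}) (d : I -> nat) :
  (forall i, P i -> size (F i) <= (d i).+1) ->
  size (\prod_(i <- r | P i) F i)%R <= (\sum_(i <- r | P i) d i).+1.
Proof.
move=> leF.
apply: (big_ind2 (fun (p : {poly R}) m => size p <= m.+1)) => //.
- by rewrite size_poly1.
- by move=> p m q m' lep leq; apply: leq_trans (size_polyMleq _ _) _; lia.
Qed.

Lemma size_coef_prod_le (R : comNzRingType) (I : Type) (r : seq I)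
  (P : pred I) (F : I -> {poly {poly R}}) (d : I -> nat) :
  (forall i, P i -> forall l, size ((F i)`_l)%R <= (d i).+1) ->
  forall l, size ((\prod_(i <- r | P i) F i)`_l)%R <= (\sum_(i <- r | P i) d i).+1.
Proof.
move=> leF.
apply: (big_ind2 (fun (p : {poly {poly R}}) m =>
  forall l, size (p`_l)%R <= m.+1)) => //.
- by move=> l; rewrite coef1; case: (l == 0)%N; rewrite ?size_poly1 ?size_poly0.
- move=> p m q m' lep leq l; rewrite coefM; apply: size_sum_le => l' _.
  by apply: leq_trans (size_polyMleq _ _) _; have := lep l'; have := leq (l - l'); lia.
Qed.

Lemma size_det_le (R : comNzRingType) (k : nat) (A : 'M[{poly R}]_k)
  (d : 'I_k -> nat) :
  (forall i j, size (A i j) <= (d i).+1) -> size (\det A) <= (\sum_i d i).+1.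
Proof.
move=> leA; apply: size_sum_le => s _.
by rewrite size_Msign; apply: size_prod_le => i _; apply: leA.
Qed.

(* A square matrix annihilating a vector with an entry equal to 1 is singular:
   (det A) v = adj A * A * v = 0. *)
Lemma det_eq0_of_kernel (S : comNzRingType) (k : nat) (A : 'M[S]_k)
  (v : 'cV[S]_k) (j0 : 'I_k) :
  (A *m v = 0 -> v j0 ord0 = 1 -> \det A = 0)%R.
Proof.
move=> Av0 vj0.
have detv0 : ((\det A)%:M *m v = 0)%R by rewrite -mul_adj_mx -mulmxA Av0 mulmx0.
by move/matrixP: detv0 => /(_ j0 ord0); rewrite mul_scalar_mx !mxE vj0 mulr1.
Qed.

Lemma size_fpoly_le (S : comNzRingType) (n k : nat) (Z : 'I_k -> {set 'I_n})
  (alpha : 'I_n -> S) (i : 'I_k) :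
  size (fpoly Z alpha i) <= #|Z i|.+1.
Proof.
rewrite -sum1_card; apply: size_prod_le => j _.
by rewrite size_XsubC.
Qed.

Lemma Amx_mul_powers (S : comNzRingType) (n k : nat) (Z : 'I_k -> {set 'I_n})
  (alpha : 'I_n -> S) (x : S) :
  (forall i, #|Z i| < k) ->
  (Amx Z alpha *m \col_(j < k) x ^+ j = \col_i (fpoly Z alpha i).[x])%R.
Proof.
move=> ltZk; apply/matrixP => i j0; rewrite !mxE.
rewrite (horner_coef_wide x (leq_trans (size_fpoly_le Z alpha i) (ltZk i))).
by apply: eq_bigr => j _; rewrite !mxE.
Qed.

Lemma det_Amx_common_root (S : comNzRingType) (n k : nat)
  (Z : 'I_k -> {set 'I_n}) (alpha : 'I_n -> S) (t : 'I_n) :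
  0 < k -> (forall i, #|Z i| < k) -> (forall i, t \in Z i) ->
  \det (Amx Z alpha) = 0%R.
Proof.
move=> k_gt0 ltZk tZ.
apply: (det_eq0_of_kernel (v := \col_(j < k) alpha t ^+ j) (j0 := Ordinal k_gt0));
  last by rewrite mxE.
rewrite Amx_mul_powers //; apply/matrixP => i j; rewrite !mxE.
by rewrite /fpoly horner_prod (bigD1 t) //= hornerXsubC subrr mul0r.
Qed.

Lemma size_alpha_at (R : comNzRingType) (n : nat) (t : 'I_n) (c : 'I_n -> R)
  (j : 'I_n) :
  size (alpha_at t c j) <= (j == t).+1.
Proof.
rewrite /alpha_at; case: (j == t); first by rewrite size_polyX.
exact: size_polyC_leq1.
Qed.

Lemma size_coef_fpoly_alpha_at (R : comNzRingType) (n k : nat)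
  (Z : 'I_k -> {set 'I_n}) (t : 'I_n) (c : 'I_n -> R) (i : 'I_k) (l : nat) :
  size ((fpoly Z (alpha_at t c) i)`_l)%R <= (t \in Z i).+1.
Proof.
rewrite /fpoly.
apply: leq_trans
  (@size_coef_prod_le _ _ _ _ _ (fun j => nat_of_bool (j == t)) _ l) _.
  move=> j _ [|[|l']]; rewrite coefB coefX coefC /=.
  - by rewrite sub0r size_polyN size_alpha_at.
  - by rewrite subr0 size_poly1.
  - by rewrite subr0 size_poly0.
rewrite ltnS; case: (boolP (t \in Z i)) => tZ.
  by rewrite (bigD1 t) //= eqxx big1 // => j /andP[_ /negPf ->].
by rewrite big1 // => j jZ; apply/eqP; rewrite eqb0; apply: contraNneq tZ => <-.
Qed.

Lemma size_det_Amx_alpha_at (R : comNzRingType) (n k : nat)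
  (Z : 'I_k -> {set 'I_n}) (t : 'I_n) (c : 'I_n -> R) :
  size (\det (Amx Z (alpha_at t c))) <= (\sum_i (t \in Z i)).+1.
Proof.
by apply: size_det_le => i j; rewrite mxE; apply: size_coef_fpoly_alpha_at.
Qed.

(* Exactly n - 1 of the pairs j < i in [n] contain a given index t: summing
   [i == t] over j < i and over i < j covers all j != i. *)
Lemma pairs_through_count (n : nat) (t : 'I_n) :
  \sum_(i < n) \sum_(j < n | j < i) ((i == t) + (j == t)) = n.-1.
Proof.
have swap : \sum_(i < n) \sum_(j < n | j < i) (j == t)
            = \sum_(i < n) \sum_(j < n | i < j) (i == t).
  by rewrite (exchange_big_dep xpredT).
rewrite (eq_bigr (fun i : 'I_n => \sum_(j < n | j < i) (i == t)
                                + \sum_(j < n | j < i) (j == t)));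
  last by move=> i _; rewrite big_split.
rewrite big_split /= swap -big_split /=.
rewrite (eq_bigr (fun i : 'I_n => \sum_(j < n | j != i) (i == t))); last first.
  move=> i _; rewrite [in RHS]big_mkcond [X in X + _]big_mkcond.
  rewrite [X in _ + X]big_mkcond -big_split /=; apply: eq_bigr => j _.
  rewrite -(inj_eq val_inj) neq_ltn.
  by case: (ltngtP j i) => _; rewrite /= ?addn0.
rewrite (bigD1 t) //= [X in _ + X]big1 => [|i /negPf nit]; last first.
  by apply: big1 => j _; rewrite nit.
rewrite addn0 (eq_bigr (fun _ => 1)) => [|j _]; last by rewrite eqxx.
by rewrite sum1_card cardC1 card_ord.
Qed.

Lemma size_vandermonde_alpha_at (R : comNzRingType) (n : nat) (t : 'I_n)
  (c : 'I_n -> R) :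
  size (\prod_(i < n) \prod_(j < n | (j < i)%N)
          (alpha_at t c i - alpha_at t c j))%R <= n.
Proof.
rewrite -[leqRHS]prednK ?(leq_ltn_trans _ (ltn_ord t)) //.
rewrite -(pairs_through_count t); apply: size_prod_le => i _.
apply: size_prod_le => j _; rewrite (leq_trans (size_polyD _ _)) //.
rewrite size_polyN geq_max.
apply/andP; split; apply: leq_trans (size_alpha_at _ _ _) _.
  by rewrite ltnS leq_addr.
by rewrite ltnS leq_addl.
Qed.

End AlphaDegreeBounds.

Theorem lemma1 (n k : nat) (hk : (1 <= k)%N) (hkn : (k <= n)%N)
  (Z : 'I_k -> {set 'I_n}) (hZ : forall i, #|Z i| = k.-1)
  (t : 'I_n) (R : comNzRingType) (c : 'I_n -> R) :
  (size (Fval Z (alpha_at t c)) <= n + k - 1)%N.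
Proof.
have ltZk i : #|Z i| < k by rewrite hZ prednK.
rewrite /Fval; case: (boolP [forall i, t \in Z i]) => [/forallP tZ | ].
  by rewrite (det_Amx_common_root _ hk ltZk tZ) mul0r size_poly0.
move=> /forallPn[i0 tNZi0].
have count_le : \sum_i (t \in Z i) <= k.-1.
  rewrite (bigD1 i0) //= (negPf tNZi0) add0n -[k in k.-1]card_ord -(cardC1 i0).
  by rewrite -sum1_card leq_sum // => i _; apply: leq_b1.
apply: leq_trans (size_polyMleq _ _) _.
move: count_le (size_det_Amx_alpha_at Z t c) (size_vandermonde_alpha_at t c).
by set m := \sum_i _; set x := size _; set y := size _; lia.
Qed.
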